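(* Let $\mathcal{D}=\{D_1,\ldots,D_N\}$ be a finite set of closed disks in the plane, $D_i$ having center $c_i$ and radius $\rho_i\ge 0$, and consider its Apollonius diagram. Let $p$ and $q$ be two points on an Apollonius edge of the cell $A_i$ of $D_i$, and let $\gamma$ be the arc of that edge between $p$ and $q$. Then $\gamma$ is contained in the smallest closed disk with center $c_i$ that contains $p$ and $q$, i.e. the closed disk of center $c_i$ and radius $\max(\|p-c_i\|,\|q-c_i\|)$.
   Context: For a point $x\in\mathbb{R}^2$, $\delta_i(x)=\|x-c_i\|-\rho_i$ (Euclidean norm). The Apollonius cell of $D_i$ is $A_i=\{x\in\mathbb{R}^2 \mid \delta_i(x)\le\delta_j(x),\ j=1,\ldots,N\}$. The one-dimensional connected sets of points belonging to exactly two Apollonius cells are the Apollonius edges; points belonging to at least three cells are the Apollonius vertices. The bisector of $D_i,D_j$ is $B_{ij}=\{x\mid \delta_i(x)=\delta_j(x)\}$, so each edge of $A_i$ lies on a bisector $B_{ij}$. *)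

(* Points of the plane are pairs (x1, x2) : R * R
   with the product topology (= the Euclidean topology). *)
From HB Require Import structures.
From mathcomp Require Import all_boot all_order all_algebra.
From mathcomp Require Import all_classical all_reals all_analysis.
Set Implicit Arguments. Unset Strict Implicit. Unset Printing Implicit Defensive.
Import Order.TTheory GRing.Theory Num.Theory numFieldNormedType.Exports.
Local Open Scope classical_set_scope.
Local Open Scope ring_scope.

Section Apollonius.
Variable R : realType.

Definition eucl_dist (x y : R * R) : R :=
  Num.sqrt ((x.1 - y.1) ^+ 2 + (x.2 - y.2) ^+ 2).

Variables (N : nat) (c : 'I_N -> R * R) (rho : 'I_N -> R).

Definition delta (i : 'I_N) (x : R * R) : R := eucl_dist x (c i) - rho i.

Definition apollonius_cell (i : 'I_N) : set (R * R) :=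
  [set x | forall j : 'I_N, delta i x <= delta j x].

Definition in_exactly_two_cells : set (R * R) :=
  [set x | exists i j : 'I_N, [/\ i != j, apollonius_cell i x,
     apollonius_cell j x &
     forall k, apollonius_cell k x -> k = i \/ k = j]].

Definition apollonius_edge_of (i : 'I_N) (E : set (R * R)) : Prop :=
  exists x, [/\ in_exactly_two_cells x,
     E = @connected_component (R * R)%type in_exactly_two_cells x &
     E `<=` apollonius_cell i].

End Apollonius.

(* The arc of the (curve) E between p and q: the points of E lying in every
   connected subset of E containing both p and q (for an arc E this is exactly
   the sub-arc with endpoints p and q). *)
Definition arc_between (R : realType) (E : set (R * R)) (p q : R * R)
  : set (R * R) :=
  [set x | forall C : set (R * R), C `<=` E -> @connected (R * R)%type C -> C p -> C q -> C x].

(** If the neighbouring cell along the edge belongs to a disk equal to D_i, the two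
cells coincide and are star-shaped with respect to c_i, so the edge contains the
segments from c_i to p and to q, and so does the arc.  Otherwise the edge lies on
the bisector {x | |x - c_i| - |x - c_j| = rho_i - rho_j}: the points of the edge on
it form a relatively clopen subset, because off the bisector no third cell is
active.  The bisector is one branch of a hyperbola with foci c_i, c_j (a ray when
|rho_i - rho_j| = |c_i - c_j|), and a single real coordinate -- the signed distance
to the focal axis, resp. the distance to c_i -- parametrizes it homeomorphically.
Hence the arc from p to q consists of points whose coordinate lies between those of
p and q, and since the distance to c_i is an increasing function of the absolute
value of that coordinate, it is largest at p or q. *)

From HB Require Import structures.
From mathcomp Require Import all_boot all_order all_algebra.
From mathcomp Require Import all_classical all_reals all_analysis.
From mathcomp Require Import ring lra.
Set Implicit Arguments. Unset Strict Implicit. Unset Printing Implicit Defensive.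
Import Order.TTheory GRing.Theory Num.Theory numFieldNormedType.Exports.
Local Open Scope classical_set_scope.
Local Open Scope ring_scope.

Section EuclideanPlane.
Variable R : realType.
Implicit Types (x y z o p : R * R) (s t : R).

Lemma eucl_dist_ge0 x y : 0 <= eucl_dist x y.
Proof. exact: sqrtr_ge0. Qed.

Lemma sqr_eucl_dist x y :
  eucl_dist x y ^+ 2 = (x.1 - y.1) ^+ 2 + (x.2 - y.2) ^+ 2.
Proof. by rewrite /eucl_dist sqr_sqrtr // addr_ge0 // sqr_ge0. Qed.

Lemma eucl_distC x y : eucl_dist x y = eucl_dist y x.
Proof. by rewrite /eucl_dist; congr Num.sqrt; ring. Qed.

Lemma eucl_dist_eq0 x y : eucl_dist x y = 0 -> x = y.
Proof.
move=> /(congr1 (fun d => d ^+ 2)); rewrite sqr_eucl_dist expr0n /= => sum0.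
have sq1 := sqr_ge0 (x.1 - y.1); have sq2 := sqr_ge0 (x.2 - y.2).
have /eqP : (x.1 - y.1) ^+ 2 = 0 by lra.
have /eqP : (x.2 - y.2) ^+ 2 = 0 by lra.
rewrite !sqrf_eq0 !subr_eq0 => /eqP e2 /eqP e1.
by rewrite [x]surjective_pairing [y]surjective_pairing e1 e2.
Qed.

Lemma cauchy_schwarz2 (u1 u2 v1 v2 : R) :
  u1 * v1 + u2 * v2 <= Num.sqrt (u1 ^+ 2 + u2 ^+ 2) * Num.sqrt (v1 ^+ 2 + v2 ^+ 2).
Proof.
rewrite -sqrtrM ?addr_ge0 ?sqr_ge0 //; apply: le_trans (ler_norm _) _.
rewrite -sqrtr_sqr; apply: ler_wsqrtr.
have -> : (u1 ^+ 2 + u2 ^+ 2) * (v1 ^+ 2 + v2 ^+ 2) =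
          (u1 * v1 + u2 * v2) ^+ 2 + (u1 * v2 - u2 * v1) ^+ 2 by ring.
by rewrite lerDl sqr_ge0.
Qed.

Lemma eucl_dist_triangle x y z : eucl_dist x z <= eucl_dist x y + eucl_dist y z.
Proof.
have cs : (x.1 - y.1) * (y.1 - z.1) + (x.2 - y.2) * (y.2 - z.2) <=
          eucl_dist x y * eucl_dist y z := cauchy_schwarz2 _ _ _ _.
rewrite -[eucl_dist x y + _]ger0_norm ?addr_ge0 ?eucl_dist_ge0 // -sqrtr_sqr.
by apply: ler_wsqrtr; rewrite (sqrrD (eucl_dist x y)) !sqr_eucl_dist; lra.
Qed.

Lemma eucl_dist_scale x y o p s : 0 <= s ->
  x.1 - y.1 = s * (p.1 - o.1) -> x.2 - y.2 = s * (p.2 - o.2) ->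
  eucl_dist x y = s * eucl_dist p o.
Proof.
move=> s0 e1 e2; rewrite /eucl_dist e1 e2 !exprMn -mulrDr.
by rewrite sqrtrM ?sqr_ge0 // sqrtr_sqr ger0_norm.
Qed.

Lemma continuous_fst : continuous (@fst R R).
Proof. by move=> x; exact: cvg_fst. Qed.

Lemma continuous_snd : continuous (@snd R R).
Proof. by move=> x; exact: cvg_snd. Qed.

Lemma continuous_pair (f g : R -> R) :
  continuous f -> continuous g -> continuous (fun t => (f t, g t)).
Proof. by move=> cf cg t; exact: (cvg_pair (cf t) (cg t)). Qed.

Lemma continuous_eucl_dist o : continuous (fun x => eucl_dist x o).
Proof.
move=> x; apply: continuous_comp; last exact: sqrt_continuous.
apply: continuousD; apply: continuousM; apply: continuousB;
  (try exact: continuous_fst); (try exact: continuous_snd); exact: cvg_cst.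
Qed.

Definition seg_pt o p t : R * R :=
  (o.1 + t * (p.1 - o.1), o.2 + t * (p.2 - o.2)).

Lemma seg_pt0 o p : seg_pt o p 0 = o.
Proof. by rewrite /seg_pt !mul0r !addr0; case: o. Qed.

Lemma seg_pt1 o p : seg_pt o p 1 = p.
Proof. by rewrite /seg_pt !mul1r !subrKC; case: p. Qed.

Lemma eucl_dist_seg_pt o p t : 0 <= t -> eucl_dist (seg_pt o p t) o = t * eucl_dist p o.
Proof. by move=> t0; apply: eucl_dist_scale => //=; ring. Qed.

Lemma eucl_dist_end_seg_pt o p t :
  t <= 1 -> eucl_dist p (seg_pt o p t) = (1 - t) * eucl_dist p o.
Proof. by move=> t1; apply: eucl_dist_scale => /=; [lra | ring | ring]. Qed.

Lemma connected_segment o p : connected (seg_pt o p @` `[0, 1]).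
Proof.
apply: connected_continuous_connected; first exact/connected_intervalP/interval_is_interval.
apply: continuous_subspaceT; apply: continuous_pair => t;
  by apply: cvgD; [exact: cvg_cst | apply: cvgM; [exact: cvg_id | exact: cvg_cst]].
Qed.

Lemma arc_between_in_coord_range (E : set (R * R)) (phi : R * R -> R) (gam : R -> R * R) p q :
    connected E -> continuous phi -> continuous gam ->
    (forall y, E y -> gam (phi y) = y) -> E p -> E q ->
  arc_between E p q `<=`
    [set y | E y /\ Num.min (phi p) (phi q) <= phi y <= Num.max (phi p) (phi q)].
Proof.
move=> cE cphi cgam phiK Ep Eq.
have phiE_itv : is_interval (phi @` E).
  apply/connected_intervalP/connected_continuous_connected => //.
  exact: continuous_subspaceT.
have [minE maxE] :
    (phi @` E) (Num.min (phi p) (phi q)) /\ (phi @` E) (Num.max (phi p) (phi q)).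
  by have [_|_] := leP (phi p) (phi q); split; [exists p | exists q | exists q | exists p].
pose I := `[Num.min (phi p) (phi q), Num.max (phi p) (phi q)].
have phiE t : t \in I -> (phi @` E) t by rewrite in_itv; exact: phiE_itv minE maxE t.
have gamI_E : gam @` [set` I] `<=` E.
  by move=> _ [t /phiE [y Ey <-] <-]; rewrite phiK.
have gamI_conn : connected (gam @` [set` I]).
  apply: connected_continuous_connected; last exact: continuous_subspaceT.
  exact/connected_intervalP/interval_is_interval.
have gamI_phi y : E y -> phi y \in I -> (gam @` [set` I]) y.
  by move=> Ey yI; exists (phi y); rewrite ?phiK.
have phi_pI : phi p \in I by rewrite in_itv /= ge_min le_max !lexx.
have phi_qI : phi q \in I by rewrite in_itv /= ge_min le_max !lexx !orbT.
move=> x /(_ _ gamI_E gamI_conn (gamI_phi _ Ep phi_pI) (gamI_phi _ Eq phi_qI)).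
case=> t tI <-; have [y Ey phiy] := phiE t tI.
by move: tI; rewrite -phiy phiK // in_itv.
Qed.

Lemma abs_monotone_le_max (f : R -> R) (u v t : R) :
    (forall s s', `|s| <= `|s'| -> f s <= f s') ->
  Num.min u v <= t <= Num.max u v -> f t <= Num.max (f u) (f v).
Proof.
move=> f_mono; wlog uv : u v / u <= v.
  move=> sym; have /orP[/sym//|/sym] := le_total u v.
  by rewrite minC maxC (maxC (f u)).
rewrite (min_idPl uv) (max_idPr uv) le_max => /andP[ut tv].
have [t0|t0] := leP 0 t; apply/orP; [right | left]; apply: f_mono.
  by rewrite (ger0_norm t0) (ger0_norm (le_trans t0 tv)).
by rewrite (ltr0_norm t0) (ltr0_norm (le_lt_trans ut t0)) lerN2.
Qed.

End EuclideanPlane.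

Lemma open_forall_lt (T : topologicalType) (R : realType) (I : finType) (P : pred I)
    (f : T -> R) (g : I -> T -> R) :
  continuous f -> (forall k, continuous (g k)) ->
  open [set y | forall k, P k -> f y < g k y].
Proof.
move=> cf cg; rewrite openE => y Oy; apply: filter_forall => k.
have [Pk|nPk] := boolP (P k); last by apply: nearW => z /negP.
have gf_open : open ((fun z => g k z - f z) @^-1` [set t | 0 < t]).
  by apply: open_comp; [move=> z _; apply: cvgB; [exact: cg | exact: cf] | exact: open_gt].
apply: filterS (open_nbhs_nbhs (conj gf_open _)) => [z|]; rewrite /= subr_gt0 //.
exact: Oy.
Qed.

Section Branch.
Variable R : realType.
Variables (ci cj : R * R) (a : R).
Implicit Types (y : R * R) (r b : R).

Let e1 := cj.1 - ci.1.
Let e2 := cj.2 - ci.2.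
Let d2 := e1 ^+ 2 + e2 ^+ 2.
Let k := d2 - a ^+ 2.

Definition branch : set (R * R) := [set y | eucl_dist y ci - eucl_dist y cj = a].

Definition cross y := e1 * (y.2 - ci.2) - e2 * (y.1 - ci.1).

(* For [y] on the branch and [r = |y - ci|], the components of [y - ci] along
   [e = cj - ci] and orthogonal to it are [(a r + k / 2) / |e|] and [cross y / |e|]. *)
Definition branch_point r b : R * R :=
  (ci.1 + ((a * r + k / 2) * e1 - b * e2) / d2,
   ci.2 + ((a * r + k / 2) * e2 + b * e1) / d2).

Definition branch_radius b := (a + Num.sqrt (d2 + 4 * b ^+ 2 / k)) / 2.

Lemma d2E : d2 = eucl_dist cj ci ^+ 2.
Proof. by rewrite sqr_eucl_dist. Qed.

Lemma branch_sqr_le y : branch y -> a ^+ 2 <= d2.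
Proof.
rewrite /branch /= => <-; rewrite d2E.
have := eucl_dist_triangle y cj ci; have := eucl_dist_triangle y ci cj.
rewrite (eucl_distC ci cj); nra.
Qed.

Lemma branch_coords y : 0 < d2 -> branch y ->
  [/\ y = branch_point (eucl_dist y ci) (cross y),
      4 * cross y ^+ 2 = k * ((2 * eucl_dist y ci - a) ^+ 2 - d2)
    & a <= 2 * eucl_dist y ci].
Proof.
move=> d2_gt0 yb; have r0 := eucl_dist_ge0 y ci; have s0 := eucl_dist_ge0 y cj.
have r2 := sqr_eucl_dist y ci; have s2 := sqr_eucl_dist y cj.
rewrite /branch /= in yb.
move: (eucl_dist y ci) (eucl_dist y cj) r0 s0 r2 s2 yb => r s r0 s0 r2 s2 yb.
have dot : e1 * (y.1 - ci.1) + e2 * (y.2 - ci.2) = a * r + k / 2.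
  have sE : s = r - a by lra.
  have : 2 * (e1 * (y.1 - ci.1) + e2 * (y.2 - ci.2)) = r ^+ 2 - s ^+ 2 + d2.
    by rewrite r2 s2 /d2 /e1 /e2; ring.
  rewrite sE /k; lra.
have lagrange : d2 * r ^+ 2 = (a * r + k / 2) ^+ 2 + cross y ^+ 2.
  by rewrite -dot r2 /cross /d2; ring.
have d2_neq0 : d2 != 0 by rewrite gt_eqF.
split; last by lra.
- rewrite /branch_point -dot /cross; case: y {r2 s2 dot lagrange} => y1 y2 /=.
  by congr (_, _); rewrite /d2 in d2_neq0 *; field.
- have -> : cross y ^+ 2 = d2 * r ^+ 2 - (a * r + k / 2) ^+ 2 by rewrite lagrange; ring.
  by rewrite /k; field.
Qed.

Lemma branch_ray y : 0 < d2 -> k = 0 -> branch y -> y = branch_point (eucl_dist y ci) 0.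
Proof.
move=> d2_gt0 k0 /(branch_coords d2_gt0) [yE + _]; rewrite k0 mul0r => /eqP.
by rewrite mulf_eq0 pnatr_eq0 sqrf_eq0 /= => /eqP cross0; rewrite {1}yE cross0.
Qed.

Lemma branch_radiusE y : 0 < d2 -> 0 < k -> branch y ->
  eucl_dist y ci = branch_radius (cross y).
Proof.
move=> d2_gt0 k_gt0 /(branch_coords d2_gt0) [_ cross2 ar]; rewrite /branch_radius.
have -> : d2 + 4 * cross y ^+ 2 / k = (2 * eucl_dist y ci - a) ^+ 2.
  by rewrite cross2; field; rewrite gt_eqF.
by rewrite sqrtr_sqr ger0_norm ?subr_ge0 //; field.
Qed.

Lemma branch_radius_mono b b' : 0 < k -> `|b| <= `|b'| -> branch_radius b <= branch_radius b'.
Proof.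
move=> k_gt0 bb'; rewrite /branch_radius ler_pM2r // lerD2l; apply: ler_wsqrtr.
rewrite lerD2l ler_pM2r ?invr_gt0 // ler_pM2l //.
by rewrite -(real_normK (num_real b)) -(real_normK (num_real b')) ler_sqr ?nnegrE.
Qed.

Lemma continuous_cross : continuous cross.
Proof.
move=> y; apply: cvgB; (apply: cvgM; first exact: cvg_cst);
  (apply: cvgB; last exact: cvg_cst); [exact: continuous_snd | exact: continuous_fst].
Qed.

Lemma continuous_branch_point (f g : R -> R) :
  continuous f -> continuous g -> continuous (fun t => branch_point (f t) (g t)).
Proof.
move=> cf cg; have cA : continuous (fun t => a * f t + k / 2).
  by move=> t; apply: cvgD; [apply: cvgM; [exact: cvg_cst | exact: cf] | exact: cvg_cst].
apply: continuous_pair => t; (apply: cvgD; first exact: cvg_cst);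
  (apply: cvgM; last exact: cvg_cst).
  by apply: cvgB; apply: cvgM; by [exact: cA | exact: cg | exact: cvg_cst].
by apply: cvgD; apply: cvgM; by [exact: cA | exact: cg | exact: cvg_cst].
Qed.

Lemma continuous_branch_radius : continuous branch_radius.
Proof.
move=> t; apply: cvgM; last exact: cvg_cst.
apply: cvgD; first exact: cvg_cst.
apply: continuous_comp; last exact: sqrt_continuous.
apply: cvgD; first exact: cvg_cst.
apply: cvgM; last exact: cvg_cst.
by apply: cvgM; [exact: cvg_cst | apply: cvgM; exact: cvg_id].
Qed.

Lemma branch_arc_in_disk E p q : ci != cj -> connected E -> E `<=` branch -> E p -> E q ->
  arc_between E p q `<=`
    [set x | eucl_dist x ci <= Num.max (eucl_dist p ci) (eucl_dist q ci)].
Proof.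
move=> cij cE Eb Ep Eq.
have d2_gt0 : 0 < d2.
  rewrite d2E exprn_gt0 // lt0r eucl_dist_ge0 andbT.
  by apply: contra_neq cij => /eucl_dist_eq0 ->.
have /orP[/eqP k0|k_gt0] : (0 == k) || (0 < k).
  by rewrite -le_eqVlt subr_ge0 (branch_sqr_le (Eb _ Ep)).
- have rayK y : E y -> branch_point (eucl_dist y ci) 0 = y.
    by move=> /Eb /(branch_ray d2_gt0 (esym k0)).
  have ray_cont := continuous_branch_point (fun _ => cvg_id) (@cst_continuous R R 0).
  move=> x /(arc_between_in_coord_range cE (@continuous_eucl_dist _ ci) ray_cont rayK Ep Eq).
  by case=> _ /andP[].
- have hypK y : E y -> branch_point (branch_radius (cross y)) (cross y) = y.
    move=> /Eb yb; rewrite -(branch_radiusE d2_gt0 k_gt0 yb).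
    by case: (branch_coords d2_gt0 yb).
  have hyp_cont := continuous_branch_point continuous_branch_radius (fun _ => cvg_id).
  move=> x /(arc_between_in_coord_range cE continuous_cross hyp_cont hypK Ep Eq) [Ex cx].
  rewrite /= !(branch_radiusE d2_gt0 k_gt0 (Eb _ _)) //.
  by apply: abs_monotone_le_max cx => s t; exact: branch_radius_mono.
Qed.

End Branch.

Section ApolloniusCells.
Variables (R : realType) (N : nat) (c : 'I_N -> R * R) (rho : 'I_N -> R).
Local Notation A := (apollonius_cell c rho).
Local Notation S := (in_exactly_two_cells c rho).
Implicit Types (i j k : 'I_N) (p y : R * R).

Lemma continuous_delta k : continuous (delta c rho k).
Proof. by move=> x; apply: cvgB; [exact: continuous_eucl_dist | exact: cvg_cst]. Qed.

Lemma delta_le k p y : delta c rho k p <= delta c rho k y + eucl_dist p y.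
Proof. by rewrite /delta; have := eucl_dist_triangle p y (c k); lra. Qed.

Lemma delta_seg_pt i p t : t \in `[0, 1] ->
  delta c rho i (seg_pt (c i) p t) = delta c rho i p - eucl_dist p (seg_pt (c i) p t).
Proof.
rewrite in_itv /= => /andP[t0 t1].
by rewrite /delta eucl_dist_seg_pt // eucl_dist_end_seg_pt //; ring.
Qed.

Lemma cell_seg_pt i p t : A i p -> t \in `[0, 1] -> A i (seg_pt (c i) p t).
Proof.
move=> Aip t01 k; rewrite delta_seg_pt //.
by have := delta_le k p (seg_pt (c i) p t); have := Aip k; lra.
Qed.

Lemma cell_seg_pt_sub i k p t : A i p -> t \in `[0, 1] -> A k (seg_pt (c i) p t) -> A k p.
Proof.
move=> Aip t01 Aky m; have := Aky i; rewrite delta_seg_pt //.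
by have := delta_le k p (seg_pt (c i) p t); have := Aip m; lra.
Qed.

Lemma two_cells_only y i j : S y -> A i y -> A j y -> j != i ->
  forall k, A k y -> k = i \/ k = j.
Proof.
move=> [a [b [ab _ _ cells]]] Ai Aj ji k /cells.
by case: (cells _ Ai) (cells _ Aj) ji => -> [] ->; rewrite ?eqxx // => _ [] ->; auto.
Qed.

Lemma exists_second_cell y i : S y -> A i y -> exists2 j, j != i & A j y.
Proof.
move=> [a [b [ab Aa Ab cells]]] /cells [->|->]; last by exists a.
by exists b; rewrite // eq_sym.
Qed.

Lemma seg_pt_two_cells i j p t : c j = c i -> rho j = rho i -> j != i ->
  S p -> A i p -> t \in `[0, 1] -> S (seg_pt (c i) p t).
Proof.
move=> cji rji ji Sp Aip t01.
have Aj z : A i z -> A j z by move=> Aiz k; rewrite /delta cji rji; exact: Aiz.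
exists i, j; split; [by rewrite eq_sym | exact: cell_seg_pt | exact/Aj/cell_seg_pt |].
move=> k /(cell_seg_pt_sub Aip t01) Akp.
exact: (two_cells_only Sp Aip (Aj _ Aip) ji Akp).
Qed.

Lemma edge_on_bisector i j E x0 p : E = connected_component S x0 -> E `<=` A i ->
  E p -> j != i -> A j p -> forall y, E y -> delta c rho i y = delta c rho j y.
Proof.
move=> E_def EA Ep ji Ajp.
have ES : E `<=` S by rewrite E_def; exact: connected_component_sub.
have cE : connected E by rewrite E_def; exact: component_connected.
(* On [E], lying on the bisector means that no third cell is active, an open condition. *)
pose O := [set y | forall k, (k != i) && (k != j) -> delta c rho i y < delta c rho k y].
pose B := [set y | delta c rho i y - delta c rho j y = 0].
have oO : open O by apply: open_forall_lt => [|k]; exact: continuous_delta.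
have cB : closed B.
  apply: (preimage_closed (D := [set t | t = 0])); last exact: closed_eq.
  by move=> z _; apply: cvgB; exact: continuous_delta.
have EBO : E `&` B = E `&` O.
  apply/seteqP; split=> z [Ez zB]; split => //.
    move=> k /andP[ki kj]; rewrite ltNge; apply/negP => ki_le.
    have Ajz : A j z by move=> m; have := EA _ Ez m; move: zB; rewrite /B /=; lra.
    have Akz : A k z by move=> m; exact: le_trans ki_le (EA _ Ez m).
    by case: (two_cells_only (ES _ Ez) (EA _ Ez) Ajz ji Akz) => /eqP;
      rewrite ?(negbTE ki) ?(negbTE kj).
  have [j' j'i Aj'z] := exists_second_cell (ES _ Ez) (EA _ Ez).
  rewrite /B /=; have [<-|j'j] := eqVneq j' j.
    by have := EA _ Ez j'; have := Aj'z i; lra.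
  by have := zB j'; rewrite j'i j'j => /(_ isT); have := Aj'z i; lra.
have EB : E `&` B = E.
  apply: cE; [exists p; split => // | by exists O | by exists B].
  by rewrite /B /=; have := EA _ Ep j; have := Ajp i; lra.
move=> y Ey; have [_] : (E `&` B) y by rewrite EB.
by rewrite /B /=; lra.
Qed.

Lemma arc_in_disk_coincident i j E x0 p q : E = connected_component S x0 ->
  E `<=` A i -> E p -> E q -> j != i -> c j = c i -> rho j = rho i ->
  arc_between E p q `<=`
    [set x | eucl_dist x (c i) <= Num.max (eucl_dist p (c i)) (eucl_dist q (c i))].
Proof.
move=> E_def EA Ep Eq ji cji rji.
have ES : E `<=` S by rewrite E_def; exact: connected_component_sub.
pose C := seg_pt (c i) p @` `[0, 1] `|` seg_pt (c i) q @` `[0, 1].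
have unit0 : (0 : R) \in `[0, 1] by rewrite in_itv /= lexx ler01.
have unit1 : (1 : R) \in `[0, 1] by rewrite in_itv /= lexx ler01.
have Cp : C p by left; exists 1; rewrite ?seg_pt1.
have Cq : C q by right; exists 1; rewrite ?seg_pt1.
have CS : C `<=` S.
  move=> _ [] [t t01 <-].
    exact: (seg_pt_two_cells cji rji ji (ES _ Ep) (EA _ Ep) t01).
  exact: (seg_pt_two_cells cji rji ji (ES _ Eq) (EA _ Eq) t01).
have cC : connected C.
  apply: connectedU; [|exact: connected_segment..].
  by exists (c i); split; exists 0; rewrite ?seg_pt0.
have CE : C `<=` E.
  have := Ep; rewrite E_def => /same_connected_component ->.
  exact: connected_component_max Cp CS cC.
move=> x /(_ C CE cC Cp Cq) [] [t]; rewrite /mkset in_itv /= => /andP[t0 t1] <-;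
  rewrite eucl_dist_seg_pt // le_max; apply/orP; [left | right].
  by have := eucl_dist_ge0 p (c i); nra.
by have := eucl_dist_ge0 q (c i); nra.
Qed.

End ApolloniusCells.

Theorem corollary2 (R : realType) (N : nat) (c : 'I_N -> R * R)
  (rho : 'I_N -> R) (rho_ge0 : forall i, 0 <= rho i)
  (i : 'I_N) (E : set (R * R)) (p q : R * R) :
  apollonius_edge_of c rho i E -> E p -> E q ->
  arc_between E p q `<=`
    [set x | eucl_dist x (c i) <= Num.max (eucl_dist p (c i)) (eucl_dist q (c i))].
Proof.
move=> [x0 [_ E_def E_cell]] Ep Eq.
have E_two : E `<=` in_exactly_two_cells c rho.
  by rewrite E_def; exact: connected_component_sub.
have [j ji Ajp] := exists_second_cell (E_two _ Ep) (E_cell _ Ep).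
have on_bis := edge_on_bisector E_def E_cell Ep ji Ajp.
have [cji|cij] := eqVneq (c j) (c i).
  have rji : rho j = rho i by have := on_bis _ Ep; rewrite /delta cji; lra.
  exact: arc_in_disk_coincident E_def E_cell Ep Eq ji cji rji.
apply: (branch_arc_in_disk (cj := c j) (a := rho i - rho j) _ _ _ Ep Eq).
- by rewrite eq_sym.
- by rewrite E_def; exact: component_connected.
- by move=> y /on_bis; rewrite /branch /delta /=; lra.
Qed.
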